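(* Let $\bm{G}_t\in\mathbb{R}^{n_1\times n_2}$, $\epsilon_t>0$, $\bm{L}_t=\epsilon_t\bm{I}_{n_1}+\mathrm{diag}(\bm{G}_t\bm{G}_t^T)$, $\bm{R}_t=\epsilon_t\bm{I}_{n_2}+\mathrm{diag}(\bm{G}_t^T\bm{G}_t)$, $\nu_t=\epsilon_t^{1/2}$, $\mu_t=(\epsilon_t+\|\bm{G}_t\|_\vee^2)^{1/2}$. Let $\bm{X}_t,\bm{X}\in\mathbb{R}^{n_1\times n_2}$ be rank-$r$ matrices, $\bm{X}_t=\bm{U}_t\bm{\Sigma}_t\bm{V}_t^T$ a compact SVD, and $\widetilde{\mathcal{P}}_{\mathbb{T}_t}$ the orthogonal projector, with respect to $\langle\cdot,\cdot\rangle_{\mathcal{W}_t}$, onto $\mathbb{T}_t=\{\bm{U}_t\bm{Q}^T+\bm{P}\bm{V}_t^T:\bm{P}\in\mathbb{R}^{n_1\times r},\bm{Q}\in\mathbb{R}^{n_2\times r}\}$. Assume $\mathcal{A}:\mathbb{R}^{n_1\times n_2}\to\mathbb{R}^m$ satisfies the restricted isometry property of order $3r$ with constant $\delta_{3r}$. Then $$\big\|\widetilde{\mathcal{P}}_{\mathbb{T}_t}\mathcal{W}_t^{-1}\mathcal{A}^*\mathcal{A}(\mathcal{I}-\widetilde{\mathcal{P}}_{\mathbb{T}_t})\bm{X}\big\|_{\mathcal{W}_t}\le\frac12\Big((\nu_t^{-1}-\mu_t^{-1})+(\nu_t^{-1}+\mu_t^{-1})\delta_{3r}\Big)\big\|(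\mathcal{I}-\widetilde{\mathcal{P}}_{\mathbb{T}_t})\bm{X}\big\|_{\mathcal{W}_t}.$$
   Context: Restricted isometry property of order $s$: there is $\delta_s\in(0,1)$ with $(1-\delta_s)\|\bm{Z}\|_F^2\le\|\mathcal{A}\bm{Z}\|_2^2\le(1+\delta_s)\|\bm{Z}\|_F^2$ for all $\bm{Z}$ of rank at most $s$. $\mathcal{A}\bm{Y}=(\langle\bm{A}_i,\bm{Y}\rangle)_{i=1}^m$, $\mathcal{A}^*\bm{p}=\sum_ip_i\bm{A}_i$ is its adjoint under the standard inner product $\langle\bm{A},\bm{B}\rangle=\mathrm{trace}(\bm{A}^T\bm{B})$. $\langle\bm{Z},\bm{Y}\rangle_{\mathcal{W}_t}=\langle\bm{L}_t^{1/4}\bm{Z}\bm{R}_t^{1/4},\bm{Y}\rangle$, $\|\cdot\|_{\mathcal{W}_t}$ its norm, and $\mathcal{W}_t^{-1}\bm{Z}=\bm{L}_t^{-1/4}\bm{Z}\bm{R}_t^{-1/4}$. $\mathcal{I}$ is the identity. $\|\bm{Z}\|_\vee=\max\{\max_i\|\bm{Z}(i,:)\|_2,\max_j\|\bm{Z}(:,j)\|_2\}$. *)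

From HB Require Import structures.
From mathcomp Require Import all_boot all_order all_algebra.
Set Implicit Arguments. Unset Strict Implicit. Unset Printing Implicit Defensive.
Import Order.TTheory GRing.Theory Num.Theory.
Local Open Scope ring_scope.

Section Defs.
Variable R : rcfType.

Definition frob_dot {n1 n2} (A B : 'M[R]_(n1, n2)) : R := \tr (A^T *m B).
Definition frob_norm {n1 n2} (A : 'M[R]_(n1, n2)) : R := Num.sqrt (frob_dot A A).

Definition Aop {m n1 n2} (A : 'I_m -> 'M[R]_(n1, n2)) (Y : 'M[R]_(n1, n2))
  : 'cV[R]_m := \col_i frob_dot (A i) Y.
Definition Aadj {m n1 n2} (A : 'I_m -> 'M[R]_(n1, n2)) (p : 'cV[R]_m)
  : 'M[R]_(n1, n2) := \sum_i p i 0 *: A i.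
Definition vnorm2 {m} (p : 'cV[R]_m) : R := Num.sqrt (\sum_i p i 0 ^+ 2).

Definition RIP {m n1 n2} (A : 'I_m -> 'M[R]_(n1, n2)) (s : nat) (delta : R) :=
  0 < delta < 1 /\
  forall Z : 'M[R]_(n1, n2), (\rank Z <= s)%N ->
    (1 - delta) * frob_norm Z ^+ 2 <= vnorm2 (Aop A Z) ^+ 2 /\
    vnorm2 (Aop A Z) ^+ 2 <= (1 + delta) * frob_norm Z ^+ 2.

Definition diagpart {n} (M : 'M[R]_n) : 'M[R]_n := diag_mx (\row_i M i i).

Definition Lmat {n1 n2} (eps : R) (G : 'M[R]_(n1, n2)) : 'M[R]_n1 :=
  eps%:M + diagpart (G *m G^T).
Definition Rmat {n1 n2} (eps : R) (G : 'M[R]_(n1, n2)) : 'M[R]_n2 :=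
  eps%:M + diagpart (G^T *m G).

Definition diag_root4 {n} (D : 'M[R]_n) : 'M[R]_n :=
  diag_mx (\row_i Num.sqrt (Num.sqrt (D i i))).

Definition Wop {n1 n2} (eps : R) (G : 'M[R]_(n1, n2)) (Z : 'M[R]_(n1, n2)) :=
  diag_root4 (Lmat eps G) *m Z *m diag_root4 (Rmat eps G).
Definition Winv {n1 n2} (eps : R) (G : 'M[R]_(n1, n2)) (Z : 'M[R]_(n1, n2)) :=
  invmx (diag_root4 (Lmat eps G)) *m Z *m invmx (diag_root4 (Rmat eps G)).

Definition Wdot {n1 n2} (eps : R) (G : 'M[R]_(n1, n2)) (Z Y : 'M[R]_(n1, n2)) :=
  frob_dot (Wop eps G Z) Y.
Definition Wnorm {n1 n2} (eps : R) (G : 'M[R]_(n1, n2)) (Z : 'M[R]_(n1, n2)) :=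
  Num.sqrt (Wdot eps G Z Z).

Definition vee_norm {n1 n2} (Z : 'M[R]_(n1, n2)) : R :=
  Num.max (\big[Num.max/0]_(i < n1) Num.sqrt (\sum_j Z i j ^+ 2))
          (\big[Num.max/0]_(j < n2) Num.sqrt (\sum_i Z i j ^+ 2)).

Definition in_tangent {n1 n2 r} (U : 'M[R]_(n1, r)) (V : 'M[R]_(n2, r))
  (Y : 'M[R]_(n1, n2)) : Prop :=
  exists (P : 'M[R]_(n1, r)) (Q : 'M[R]_(n2, r)), Y = U *m Q^T + P *m V^T.

Definition is_W_proj {n1 n2 r} (eps : R) (G : 'M[R]_(n1, n2))
  (U : 'M[R]_(n1, r)) (V : 'M[R]_(n2, r))
  (P : 'M[R]_(n1, n2) -> 'M[R]_(n1, n2)) : Prop :=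
  forall Z, in_tangent U V (P Z) /\
    forall Y, in_tangent U V Y -> Wdot eps G (Z - P Z) Y = 0.

Definition compact_svd {n1 n2 r} (X : 'M[R]_(n1, n2)) (U : 'M[R]_(n1, r))
  (S : 'M[R]_r) (V : 'M[R]_(n2, r)) : Prop :=
  [/\ U^T *m U = 1%:M, V^T *m V = 1%:M,
      (exists2 s : 'rV[R]_r, S = diag_mx s & forall i, 0 < s 0 i)
    & X = U *m S *m V^T].

End Defs.

From HB Require Import structures.
From mathcomp Require Import all_boot all_order all_algebra.
From mathcomp Require Import ring.
Import Order.TTheory GRing.Theory Num.Theory.
Local Open Scope ring_scope.

(* Write D = (I - P_T) X and Y = P_T W^-1 A^* A D.  Since Y lies in T and D is
   W-orthogonal to T, ||Y||_W^2 = <W W^-1 A^* A D, Y> = <A D, A Y>.  The weights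
   of W lie between nu and mu, so nu ||Z||_F^2 <= ||Z||_W^2 <= mu ||Z||_F^2, and the
   RIP becomes (1 - delta)/mu ||Z||_W^2 <= ||A Z||^2 <= (1 + delta)/nu ||Z||_W^2
   for every Z of rank at most 3r, in particular for all combinations of D and Y.
   Polarizing <A D, A Y> with ||Y||_W D +- ||D||_W Y, whose squared W-norms both
   equal 2 ||D||_W^2 ||Y||_W^2 by orthogonality, bounds it by the stated constant
   times ||D||_W ||Y||_W; dividing by ||Y||_W concludes. *)

Section Frobenius.
Variables (R : rcfType) (n1 n2 : nat).
Implicit Types (A B Z : 'M[R]_(n1, n2)).

Lemma frob_dotE A B : frob_dot A B = \sum_j \sum_i A i j * B i j.
Proof.
rewrite /frob_dot /mxtrace; apply: eq_bigr => j _; rewrite !mxE.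
by apply: eq_bigr => i _; rewrite mxE.
Qed.

Lemma frob_dotC A B : frob_dot A B = frob_dot B A.
Proof. by rewrite /frob_dot -mxtrace_tr trmx_mul trmxK. Qed.

Lemma frob_dotDl A B Z : frob_dot (A + B) Z = frob_dot A Z + frob_dot B Z.
Proof. by rewrite /frob_dot linearD /= mulmxDl mxtraceD. Qed.

Lemma frob_dotZl a A Z : frob_dot (a *: A) Z = a * frob_dot A Z.
Proof. by rewrite /frob_dot linearZ /= -scalemxAl mxtraceZ. Qed.

Lemma frob_dotDr A B Z : frob_dot Z (A + B) = frob_dot Z A + frob_dot Z B.
Proof. by rewrite frob_dotC frob_dotDl !(frob_dotC Z). Qed.

Lemma frob_dotZr a A Z : frob_dot Z (a *: A) = a * frob_dot Z A.
Proof. by rewrite frob_dotC frob_dotZl (frob_dotC Z). Qed.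

Lemma frob_dot0l Z : frob_dot 0 Z = 0.
Proof. by rewrite /frob_dot trmx0 mul0mx mxtrace0. Qed.

Lemma frob_dot0r Z : frob_dot Z 0 = 0.
Proof. by rewrite /frob_dot mulmx0 mxtrace0. Qed.

Lemma frob_dot_suml m (p : 'I_m -> R) (F : 'I_m -> 'M[R]_(n1, n2)) Z :
  frob_dot (\sum_k p k *: F k) Z = \sum_k p k * frob_dot (F k) Z.
Proof.
elim/big_rec2: _ => [|k x y _ <-]; first exact: frob_dot0l.
by rewrite frob_dotDl frob_dotZl.
Qed.

Lemma frob_dot_ge0 Z : 0 <= frob_dot Z Z.
Proof. by rewrite frob_dotE; do 2![apply: sumr_ge0 => ? _]; rewrite -expr2 sqr_ge0. Qed.

Lemma frob_dot_eq0 Z : frob_dot Z Z = 0 -> Z = 0.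
Proof.
have sq_ge0 (x : R) : 0 <= x * x by rewrite -expr2 sqr_ge0.
rewrite frob_dotE => Z0; apply/matrixP => i j; rewrite mxE.
have Zj0 : \sum_i Z i j * Z i j = 0.
  by apply: (psumr_eq0P _ Z0) => // k _; apply: sumr_ge0.
by apply/eqP; rewrite -sqrf_eq0 expr2 (psumr_eq0P _ Zj0).
Qed.

End Frobenius.

Lemma sqrt_sqrt_mul_bounds (R : rcfType) (lo hi x y : R) :
  0 <= lo -> lo <= x <= hi -> lo <= y <= hi ->
  Num.sqrt lo <= Num.sqrt (Num.sqrt x) * Num.sqrt (Num.sqrt y) <= Num.sqrt hi.
Proof.
move=> lo0 /andP[lox xhi] /andP[loy yhi].
have x0 : 0 <= x by apply: le_trans lox.
have y0 : 0 <= y by apply: le_trans loy.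
have hi0 : 0 <= hi by apply: le_trans xhi.
have split_sqrt (z : R) : 0 <= z -> Num.sqrt z = Num.sqrt (Num.sqrt z) * Num.sqrt (Num.sqrt z).
  by move=> z0; rewrite -expr2 sqr_sqrtr ?sqrtr_ge0.
rewrite (split_sqrt lo) // (split_sqrt hi) //.
by apply/andP; split; apply: ler_pM; rewrite ?sqrtr_ge0 // !ler_sqrt ?sqrtr_ge0.
Qed.

Lemma diag_root4_unit (R : rcfType) n (D : 'M[R]_n) :
  (forall i, 0 < D i i) -> diag_root4 D \in unitmx.
Proof.
move=> D_gt0; rewrite unitmxE det_diag unitfE; apply/prodf_neq0 => i _.
by rewrite mxE gt_eqF // !sqrtr_gt0.
Qed.

Section WeightedInnerProduct.
Local Set Implicit Arguments. Local Unset Strict Implicit.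
Variables (R : rcfType) (n1 n2 : nat) (eps : R) (G : 'M[R]_(n1, n2)).
Hypothesis eps_gt0 : 0 < eps.
Implicit Types (Y Z : 'M[R]_(n1, n2)).

Let nu := Num.sqrt eps.
Let mu := Num.sqrt (eps + vee_norm G ^+ 2).

Lemma Lmat_diagE i : Lmat eps G i i = eps + \sum_k G i k ^+ 2.
Proof.
rewrite /Lmat /diagpart !mxE eqxx !mulr1n; congr (_ + _).
by apply: eq_bigr => k _; rewrite mxE expr2.
Qed.

Lemma Rmat_diagE j : Rmat eps G j j = eps + \sum_k G k j ^+ 2.
Proof.
rewrite /Rmat /diagpart !mxE eqxx !mulr1n; congr (_ + _).
by apply: eq_bigr => k _; rewrite mxE expr2.
Qed.

Lemma vee_norm_ge0 : 0 <= vee_norm G.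
Proof. by rewrite /vee_norm le_max bigmax_ge_id. Qed.

Lemma sqr_le_vee_norm (x : R) : 0 <= x -> Num.sqrt x <= vee_norm G -> x <= vee_norm G ^+ 2.
Proof. by move=> x0 le_x; rewrite -(sqr_sqrtr x0) lerXn2r ?nnegrE ?sqrtr_ge0 ?vee_norm_ge0. Qed.

Lemma Lmat_diag_bounds i : eps <= Lmat eps G i i <= eps + vee_norm G ^+ 2.
Proof.
rewrite Lmat_diagE lerDl lerD2l sumr_ge0 => [|k _]; last exact: sqr_ge0.
apply: sqr_le_vee_norm; first by apply: sumr_ge0 => k _; apply: sqr_ge0.
by rewrite /vee_norm le_max (le_bigmax _ (fun i => Num.sqrt (\sum_j G i j ^+ 2))).
Qed.

Lemma Rmat_diag_bounds j : eps <= Rmat eps G j j <= eps + vee_norm G ^+ 2.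
Proof.
rewrite Rmat_diagE lerDl lerD2l sumr_ge0 => [|k _]; last exact: sqr_ge0.
apply: sqr_le_vee_norm; first by apply: sumr_ge0 => k _; apply: sqr_ge0.
by rewrite /vee_norm le_max (le_bigmax _ (fun j => Num.sqrt (\sum_i G i j ^+ 2))) orbT.
Qed.

Definition Wweight i j :=
  Num.sqrt (Num.sqrt (Lmat eps G i i)) * Num.sqrt (Num.sqrt (Rmat eps G j j)).

Lemma Wweight_bounds i j : nu <= Wweight i j <= mu.
Proof.
exact: sqrt_sqrt_mul_bounds (ltW eps_gt0) (Lmat_diag_bounds i) (Rmat_diag_bounds j).
Qed.

Lemma WdotE Z Y : Wdot eps G Z Y = \sum_j \sum_i Wweight i j * (Z i j * Y i j).
Proof.
rewrite /Wdot frob_dotE; apply: eq_bigr => j _; apply: eq_bigr => i _.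
rewrite /Wop /diag_root4 /Wweight; set L := Lmat _ _; set Rt := Rmat _ _.
by rewrite mul_mx_diag mul_diag_mx !mxE; ring.
Qed.

Lemma WdotC Z Y : Wdot eps G Z Y = Wdot eps G Y Z.
Proof.
by rewrite !WdotE; apply: eq_bigr => j _; apply: eq_bigr => i _; rewrite (mulrC (Z i j)).
Qed.

Lemma WdotDl Z1 Z2 Y : Wdot eps G (Z1 + Z2) Y = Wdot eps G Z1 Y + Wdot eps G Z2 Y.
Proof. by rewrite /Wdot /Wop mulmxDr mulmxDl frob_dotDl. Qed.

Lemma WdotZl a Z Y : Wdot eps G (a *: Z) Y = a * Wdot eps G Z Y.
Proof. by rewrite /Wdot /Wop -scalemxAr -scalemxAl frob_dotZl. Qed.

Lemma WdotBl Z1 Z2 Y : Wdot eps G (Z1 - Z2) Y = Wdot eps G Z1 Y - Wdot eps G Z2 Y.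
Proof. by rewrite -scaleN1r WdotDl WdotZl mulN1r. Qed.

Lemma WdotDr Z Y1 Y2 : Wdot eps G Z (Y1 + Y2) = Wdot eps G Z Y1 + Wdot eps G Z Y2.
Proof. by rewrite WdotC WdotDl !(WdotC _ Z). Qed.

Lemma WdotZr a Z Y : Wdot eps G Z (a *: Y) = a * Wdot eps G Z Y.
Proof. by rewrite WdotC WdotZl (WdotC _ Z). Qed.

Lemma Wdot_orth_comb x y Z Y : Wdot eps G Z Y = 0 ->
  Wdot eps G (x *: Z + y *: Y) (x *: Z + y *: Y) =
  x ^+ 2 * Wdot eps G Z Z + y ^+ 2 * Wdot eps G Y Y.
Proof.
move=> ZY0; rewrite WdotDl !WdotDr !WdotZl !WdotZr (WdotC Y Z) ZY0; ring.
Qed.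

Lemma Wdot_frob_bounds Z :
  nu * frob_dot Z Z <= Wdot eps G Z Z <= mu * frob_dot Z Z.
Proof.
rewrite WdotE frob_dotE !mulr_sumr; apply/andP; split; apply: ler_sum => j _;
  rewrite mulr_sumr; apply: ler_sum => i _; have /andP[lo hi] := Wweight_bounds i j;
  by apply: ler_wpM2r; rewrite // -expr2 sqr_ge0.
Qed.

Lemma Wdot_ge0 Z : 0 <= Wdot eps G Z Z.
Proof.
have /andP[+ _] := Wdot_frob_bounds Z; apply: le_trans.
by rewrite mulr_ge0 ?sqrtr_ge0 ?frob_dot_ge0.
Qed.

Lemma sqr_Wnorm Z : Wnorm eps G Z ^+ 2 = Wdot eps G Z Z.
Proof. by rewrite sqr_sqrtr ?Wdot_ge0. Qed.

Lemma Wnorm_eq0 Z : Wnorm eps G Z = 0 -> Z = 0.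
Proof.
move=> Z0; apply: frob_dot_eq0; apply/eqP; rewrite eq_le frob_dot_ge0 andbT.
have /andP[+ _] := Wdot_frob_bounds Z.
by rewrite -sqr_Wnorm Z0 expr0n /= pmulr_rle0 // sqrtr_gt0.
Qed.

Lemma Wop_Winv Z : Wop eps G (Winv eps G Z) = Z.
Proof.
have uL : diag_root4 (Lmat eps G) \in unitmx.
  by apply: diag_root4_unit => i; case/andP: (Lmat_diag_bounds i) => /(lt_le_trans eps_gt0).
have uR : diag_root4 (Rmat eps G) \in unitmx.
  by apply: diag_root4_unit => j; case/andP: (Rmat_diag_bounds j) => /(lt_le_trans eps_gt0).
by rewrite /Wop /Winv !mulmxA mulmxV // mul1mx -mulmxA mulVmx // mulmx1.
Qed.

End WeightedInnerProduct.

Section MeasurementOperator.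
Variables (R : rcfType) (m n1 n2 : nat) (A : 'I_m -> 'M[R]_(n1, n2)).

Lemma sqr_vnorm2 (p : 'cV[R]_m) : vnorm2 p ^+ 2 = \sum_i p i 0 ^+ 2.
Proof. by rewrite sqr_sqrtr // sumr_ge0 // => i _; apply: sqr_ge0. Qed.

Lemma vnorm2_polarization (p q : 'cV[R]_m) :
  vnorm2 (p + q) ^+ 2 - vnorm2 (p - q) ^+ 2 = 4 * \sum_i p i 0 * q i 0.
Proof.
rewrite !sqr_vnorm2 -sumrB mulr_sumr; apply: eq_bigr => i _; rewrite !mxE; ring.
Qed.

Lemma Aop_comb x y (Z Y : 'M[R]_(n1, n2)) :
  Aop A (x *: Z + y *: Y) = x *: Aop A Z + y *: Aop A Y.
Proof. by apply/matrixP => i j; rewrite !mxE frob_dotDr !frob_dotZr. Qed.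

Lemma Aop0 : Aop A 0 = 0.
Proof. by apply/matrixP => i j; rewrite !mxE frob_dot0r. Qed.

Lemma frob_dot_Aadj (p : 'cV[R]_m) (Y : 'M[R]_(n1, n2)) :
  frob_dot (Aadj A p) Y = \sum_i p i 0 * Aop A Y i 0.
Proof. by rewrite frob_dot_suml; apply: eq_bigr => i _; rewrite mxE. Qed.

End MeasurementOperator.

Section TangentSpace.
Local Set Implicit Arguments. Local Unset Strict Implicit.
Variables (R : rcfType) (n1 n2 r : nat) (U : 'M[R]_(n1, r)) (V : 'M[R]_(n2, r)).

Lemma in_tangent_comb x y (Y1 Y2 : 'M[R]_(n1, n2)) :
  in_tangent U V Y1 -> in_tangent U V Y2 -> in_tangent U V (x *: Y1 + y *: Y2).
Proof.
move=> [P1 [Q1 ->]] [P2 [Q2 ->]].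
exists (x *: P1 + y *: P2), (x *: Q1 + y *: Q2).
rewrite !linearD !linearZ /=.
by rewrite mulmxDl -!scalemxAl addrACA.
Qed.

Lemma rank_in_tangent (Y : 'M[R]_(n1, n2)) : in_tangent U V Y -> (\rank Y <= r + r)%N.
Proof.
move=> [P [Q ->]]; apply: leq_trans (mxrank_add _ _) _.
by apply: leq_add; apply: mulmx_max_rank.
Qed.

End TangentSpace.

Section RestrictedIsometryWeighted.
Local Set Implicit Arguments. Local Unset Strict Implicit.
Variables (R : rcfType) (m n1 n2 s : nat) (eps delta : R).
Variables (G : 'M[R]_(n1, n2)) (A : 'I_m -> 'M[R]_(n1, n2)).
Hypotheses (eps_gt0 : 0 < eps) (rip : RIP A s delta).
Implicit Types (D Y Z : 'M[R]_(n1, n2)).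

Let nu := Num.sqrt eps.
Let mu := Num.sqrt (eps + vee_norm G ^+ 2).

Let nu_gt0 : 0 < nu. Proof. by rewrite sqrtr_gt0. Qed.
Let mu_gt0 : 0 < mu. Proof. by rewrite sqrtr_gt0 ltr_wpDr // sqr_ge0. Qed.

Lemma RIP_Wconst_ge0 : 0 <= 2^-1 * ((nu^-1 - mu^-1) + (nu^-1 + mu^-1) * delta).
Proof.
have [/andP[d_gt0 _] _] := rip.
have nu_le_mu : nu <= mu by rewrite ler_sqrt ?lerDl ?sqr_ge0 // ltW // ltr_wpDr ?sqr_ge0.
have inv_le : mu^-1 <= nu^-1 by rewrite lef_pV2.
by rewrite mulr_ge0 ?invr_ge0 // addr_ge0 ?subr_ge0 // mulr_ge0 ?addr_ge0 ?invr_ge0 ?ltW.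
Qed.

Lemma RIP_Wdot Z : (\rank Z <= s)%N ->
  (1 - delta) / mu * Wdot eps G Z Z <= vnorm2 (Aop A Z) ^+ 2 <=
  (1 + delta) / nu * Wdot eps G Z Z.
Proof.
move=> rkZ; have [/andP[d_gt0 d_lt1] /(_ Z rkZ)[lo hi]] := rip.
rewrite /frob_norm sqr_sqrtr ?frob_dot_ge0 // in lo hi.
have /andP[nuF Fmu] := Wdot_frob_bounds G eps_gt0 Z.
have F_le : frob_dot Z Z <= Wdot eps G Z Z / nu by rewrite ler_pdivlMr // mulrC.
have F_ge : Wdot eps G Z Z / mu <= frob_dot Z Z by rewrite ler_pdivrMr // mulrC.
rewrite !(mulrAC _ _^-1) -!mulrA; apply/andP; split.
- by apply: le_trans lo; rewrite ler_wpM2l // subr_ge0 ltW.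
- by apply: le_trans hi _; rewrite ler_wpM2l // addr_ge0 // ltW.
Qed.

Lemma RIP_Wdot_orth_inner D Y : Wdot eps G D Y = 0 ->
  (forall x y, \rank (x *: D + y *: Y)%R <= s)%N ->
  \sum_i Aop A D i 0 * Aop A Y i 0 <=
  2^-1 * ((nu^-1 - mu^-1) + (nu^-1 + mu^-1) * delta) * Wnorm eps G D * Wnorm eps G Y.
Proof.
move=> DY0 rk_comb; set a := Wnorm eps G D; set b := Wnorm eps G Y.
have [a0|a_neq0] := eqVneq a 0.
  by rewrite a0 mulr0 mul0r (Wnorm_eq0 eps_gt0 a0) Aop0 big1 // => i _; rewrite mxE mul0r.
have [b0|b_neq0] := eqVneq b 0.
  by rewrite b0 mulr0 (Wnorm_eq0 eps_gt0 b0) Aop0 big1 // => i _; rewrite !mxE mulr0.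
have a_gt0 : 0 < a by rewrite lt_def a_neq0 sqrtr_ge0.
have b_gt0 : 0 < b by rewrite lt_def b_neq0 sqrtr_ge0.
have Wdot_comb x : x ^+ 2 = a ^+ 2 ->
    Wdot eps G (b *: D + x *: Y) (b *: D + x *: Y) = 2 * (a ^+ 2 * b ^+ 2).
  by move=> x2; rewrite Wdot_orth_comb // x2 -!(sqr_Wnorm G eps_gt0) -/a -/b; ring.
have polar : vnorm2 (Aop A (b *: D + a *: Y)) ^+ 2
             - vnorm2 (Aop A (b *: D + (- a) *: Y)) ^+ 2
    = 4 * (a * b) * \sum_i Aop A D i 0 * Aop A Y i 0.
  rewrite !Aop_comb scaleNr vnorm2_polarization !mulr_sumr.
  by apply: eq_bigr => i _; rewrite !mxE; ring.
have /andP[_ hi] := RIP_Wdot (rk_comb b a).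
have /andP[lo _] := RIP_Wdot (rk_comb b (- a)).
rewrite Wdot_comb // in hi; rewrite Wdot_comb ?sqrrN // in lo.
have := lerB hi lo; rewrite polar.
have -> : (1 + delta) / nu * (2 * (a ^+ 2 * b ^+ 2))
          - (1 - delta) / mu * (2 * (a ^+ 2 * b ^+ 2))
    = 4 * (a * b) * (2^-1 * ((nu^-1 - mu^-1) + (nu^-1 + mu^-1) * delta) * a * b).
  by field; rewrite !gt_eqF.
by rewrite ler_pM2l // pmulr_rgt0 // mulr_gt0.
Qed.

End RestrictedIsometryWeighted.

Theorem lemma3p9 (R : rcfType) (n1 n2 r m : nat)
  (G : 'M[R]_(n1, n2)) (eps : R) (Xt X : 'M[R]_(n1, n2))
  (U : 'M[R]_(n1, r)) (S : 'M[R]_r) (V : 'M[R]_(n2, r))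
  (PT : 'M[R]_(n1, n2) -> 'M[R]_(n1, n2))
  (A : 'I_m -> 'M[R]_(n1, n2)) (delta : R) :
  0 < eps ->
  \rank Xt = r -> \rank X = r ->
  compact_svd Xt U S V ->
  is_W_proj eps G U V PT ->
  RIP A (3 * r) delta ->
  let nu := Num.sqrt eps in
  let mu := Num.sqrt (eps + vee_norm G ^+ 2) in
  let D := X - PT X in
  Wnorm eps G (PT (Winv eps G (Aadj A (Aop A D))))
    <= 2^-1 * ((nu^-1 - mu^-1) + (nu^-1 + mu^-1) * delta) * Wnorm eps G D.
Proof.
move=> eps_gt0 _ rkX _ PT_proj rip; cbv zeta.
set nu := Num.sqrt eps; set mu := Num.sqrt _; set D := X - PT X.
set M := Winv eps G _; set Y := PT M.
have [TY M_orth] := PT_proj M.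
have [TPX X_orth] := PT_proj X.
have sqrY : Wnorm eps G Y ^+ 2 = \sum_i Aop A D i 0 * Aop A Y i 0.
  rewrite sqr_Wnorm //; move/eqP: (M_orth Y TY); rewrite WdotBl subr_eq0 => /eqP <-.
  by rewrite /Wdot Wop_Winv // frob_dot_Aadj.
have rk_comb x y : (\rank (x *: D + y *: Y)%R <= 3 * r)%N.
  rewrite /D scalerBr -addrA -scaleNr mulSn mul2n -addnn.
  apply: leq_trans (mxrank_add _ _) (leq_add _ _); first by rewrite -rkX mxrank_scale.
  exact: rank_in_tangent (in_tangent_comb _ _ TPX TY).
have := RIP_Wdot_orth_inner eps_gt0 rip (X_orth Y TY) rk_comb.
rewrite -sqrY -/D (mulrC _ (Wnorm _ _ Y)) expr2.
have [Y_gt0|Y_le0 _] := ltrP 0 (Wnorm eps G Y); first by rewrite ler_pM2l.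
by rewrite (le_trans Y_le0) // mulr_ge0 ?sqrtr_ge0 ?(RIP_Wconst_ge0 G eps_gt0 rip).
Qed.
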